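(* For each integer $p\ge 2$ there is a constant $C_p>0$ such that for arbitrarily large $n$ (i.e. for infinitely many positive integers $n$) there exists a $(p-1)$-dimensional simplicial complex $\Gamma$ with $n$ vertices satisfying $\mathrm{gr}_{p-1}(\Gamma)>2p$ and $f_{p-1}(\Gamma)\ge C_p\,n^{\,p-\frac{p}{2^p-1}}$.
   Context: A simplicial complex $\Gamma$ on a finite vertex set $V=V(\Gamma)$ is a family of subsets of $V$ (faces) closed under taking subsets; its dimension is $\max\{|F|:F\in\Gamma\}-1$; $f_j(\Gamma)$ is the number of faces with $j+1$ elements. For $W\subseteq V$, $\Gamma[W]=\{F\in\Gamma:F\subseteq W\}$; for a face $F$ (possibly empty), $\mathrm{lk}_\Gamma(F)=\{G\setminus F: F\subseteq G\in\Gamma\}$. Fix a field $\mathbf{k}$; $\tilde H_j(\cdot;\mathbf{k})$ is reduced simplicial homology. The $(p-1)$-girth is $\mathrm{gr}_{p-1}(\Gamma)=\min\{|W|: W\subseteq V(\Gamma),\ \tilde H_{p-1}(\mathrm{lk}_\Gamma(F)[W];\mathbf{k})\neq 0 \text{ for some face } F\in\Gamma \text{ (including } F=\emptyset)\}$, or $\infty$ if none exists. *)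

From HB Require Import structures.
From mathcomp Require Import all_boot all_order all_algebra.
Set Implicit Arguments. Unset Strict Implicit. Unset Printing Implicit Defensive.
Import GRing.Theory.

Section SimplicialDefs.
Variable n : nat.
Notation family := {set {set 'I_n}}.

(* Simplicial complex on vertex set 'I_n: closed under subsets, and every
   element of 'I_n is a vertex (so the complex has exactly n vertices). *)
Definition is_simplicial_complex (G : family) : Prop :=
  (forall F H : {set 'I_n}, F \in G -> H \subset F -> H \in G) /\
  (forall v : 'I_n, [set v] \in G).

(* dimension = max |F| - 1 (as a nat, truncated; only used for positive dims) *)
Definition dimension (G : family) : nat := (\max_(F in G) #|F|).-1.

Definition fnum (G : family) (j : nat) : nat := #|[set F in G | #|F| == j.+1]|.

Definition induced (G : family) (W : {set 'I_n}) : family :=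
  [set F in G | F \subset W].

Definition link (G : family) (F : {set 'I_n}) : family :=
  [set H :\: F | H in [set H in G | F \subset H]].

Definition faces_of (G : family) (k : nat) : {set {set 'I_n}} :=
  [set F in G | #|F| == k].

(* Simplicial boundary map from (k+1)-element faces to k-element faces (chains
   as row vectors), vertices ordered by the natural order of 'I_n:
   d(s) = sum_{v in s} (-1)^{#{u in s | u < v}} (s \ v). *)
Definition bd_mx (K : fieldType) (G : family) (k : nat) :
  'M[K]_(#|faces_of G k.+1|, #|faces_of G k|) :=
  \matrix_(i < #|faces_of G k.+1|, j < #|faces_of G k|)
    (let s : {set 'I_n} := enum_val i in let t : {set 'I_n} := enum_val j in
     if (t \subset s) && (#|s :\: t| == 1%N)
     then ((-1) ^+ #|[set u in s | [exists v in s :\: t, (u < v)%N]]|)%R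
     else 0%R).

(* reduced homology H~_j(G; K) is nonzero: some j-cycle is not a boundary,
   i.e. ker d_j is not contained in im d_{j+1}.  (C_{-1} = K spanned by the
   empty face, so this is reduced homology.) *)
Definition rhom_nonzero (K : fieldType) (G : family) (j : nat) : bool :=
  ~~ (kermx (bd_mx K G j) <= bd_mx K G j.+1)%MS.

Definition girth_witness (K : fieldType) (G : family) (j : nat) (W : {set 'I_n}) : bool :=
  [exists F in G, rhom_nonzero K (induced (link G F) W) j].

(* gr_j(G): None encodes infinity *)
Definition girth (K : fieldType) (G : family) (j : nat) : option nat :=
  if [exists W, girth_witness K G j W]
  then Some (\big[minn/n.+1]_(W | girth_witness K G j W) #|W|)
  else None.
End SimplicialDefs.

Definition ext_gt (g : option nat) (m : nat) : bool :=
  if g is Some x then (m < x)%N else true.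

From HB Require Import structures.
From mathcomp Require Import all_boot all_order all_algebra.
From mathcomp Require Import zify.
From Stdlib Require Import Reals Lia Lra.

(* Construction of sparse complexes of high (p-1)-girth by a deletion method.

   Vertices are p parts of m labels each; a map f : 'I_p -> 'I_m spans the
   p-partite facet {(i, f i)}.  A "box" is a pair (a, b) of maps differing in
   every coordinate; its 2^p corners take each coordinate from a or from b.
   For a box-free family S the complex generated by the facets of S has
   (p-1)-girth > 2p: a (p-1)-cycle supported on at most 2p vertices of a link
   would, by the free-face criterion for the boundary map, give a family of
   facets closed under changing one coordinate, and such a family inside 2p
   vertices contains all corners of a box.  A random family, each point kept
   with probability 1/(2 M^p) among the M^((2^p-1) p) points with
   m = M^(2^p-1), contains few boxes; removing one point per box (averaging
   over all selections instead of probabilities) leaves a box-free family of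
   size >= M^((2^p-1) p) / (4 M^p), which is >= C_p n^(p - p/(2^p-1)) for
   n = p M^(2^p-1) vertices. *)

Module BoxFreeComplexes.
Import ssrnat GRing.Theory.
Set Implicit Arguments. Unset Strict Implicit. Unset Printing Implicit Defensive.

Section FreeFaces.
Local Open Scope ring_scope.

(* Free-face criterion: if every nonempty set Z of (j+1)-faces has a member s0
   and a vertex v of s0 such that s0 is the only face of Z containing s0 \ v,
   then the boundary map d_j is injective on (j+1)-chains, so no j-cycle
   survives and H~_j vanishes.  (Faces of G are assumed closed under removing
   one vertex, so that s \ v is indeed a j-face.) *)
Lemma free_face_acyclic (K : fieldType) n (G : {set {set 'I_n}}) (j : nat) :
  (forall s, s \in faces_of G j.+1 -> forall v, v \in s -> s :\ v \in G) ->
  (forall Z : {set {set 'I_n}}, Z != set0 -> Z \subset faces_of G j.+1 ->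
     exists2 s0, s0 \in Z & exists2 v, v \in s0 &
       forall s, s \in Z -> s0 :\ v \subset s -> s = s0) ->
  ~~ rhom_nonzero K G j.
Proof.
move=> Gcl free; rewrite /rhom_nonzero negbK.
suff /inj_row_free : forall u : 'rV[K]_#|faces_of G j.+1|, u *m bd_mx K G j = 0 -> u = 0.
  by rewrite -kermx_eq0 => /eqP ->; exact: sub0mx.
move=> u uB0; apply/eqP; apply: contraT => /rV0Pn [i1 ui1].
(* Z is the support of the chain u; the boundary coefficient of u at s0 \ v
   is then, up to sign, the coefficient of u at the free face s0. *)
set Z := [set enum_val i | i in [set i | u ord0 i != 0]].
have ZF : Z \subset faces_of G j.+1.
  by apply/subsetP => s /imsetP [i _ ->]; exact: enum_valP.
have Z_neq0 : Z != set0.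
  by apply/set0Pn; exists (enum_val i1); apply/imsetP; exists i1; rewrite ?inE.
have [s0 /imsetP [i0 + ->] [v vs0 s0_only]] := free Z Z_neq0 ZF.
rewrite inE => ui0.
have tF : enum_val i0 :\ v \in faces_of G j.
  have /setIdP [s0G /eqP cs0] := enum_valP i0.
  rewrite inE Gcl ?enum_valP //=; move: cs0; rewrite (cardsD1 v) vs0 add1n.
  by case=> ->.
set jt := enum_rank_in tF (enum_val i0 :\ v).
have Ejt : enum_val jt = enum_val i0 :\ v by rewrite /jt enum_rankK_in.
move/rowP: uB0 => /(_ jt); rewrite !mxE (bigD1 i0) //= big1 => [|k k_neq].
  rewrite !mxE Ejt /= subD1set setDDr setDv set0U (setIidPr _) ?sub1set //.
  rewrite cards1 eqxx /= addr0 => /eqP.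
  by rewrite mulf_eq0 signr_eq0 orbF (negbTE ui0).
rewrite !mxE Ejt /=; case: (boolP (u ord0 k == 0)) => [/eqP -> | uk]; first by rewrite mul0r.
case: (boolP (enum_val i0 :\ v \subset enum_val k)) => sub; last by rewrite /= mulr0.
have /enum_val_inj Ek : enum_val k = enum_val i0.
  by apply: s0_only => //; apply/imsetP; exists k; rewrite ?inE.
by rewrite Ek eqxx in k_neq.
Qed.

End FreeFaces.

Section Boxes.
Variables p m : nat.
Implicit Types (a b f g h : {ffun 'I_p -> 'I_m}) (S Z : {set {ffun 'I_p -> 'I_m}}).

(* The vertex set is the disjoint union of p parts 'I_m, indexed as
   'I_#|'I_p * 'I_m|; a map f : 'I_p -> 'I_m picks one vertex per part and
   thus spans a p-partite (p-1)-simplex, its facet. *)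
Definition vtx (i : 'I_p) (x : 'I_m) : 'I_#|{: 'I_p * 'I_m}| := enum_rank (i, x).

Definition facet f : {set 'I_#|{: 'I_p * 'I_m}|} := [set vtx i (f i) | i : 'I_p].

Definition update f (i : 'I_p) (y : 'I_m) : {ffun 'I_p -> 'I_m} :=
  [ffun j => if j == i then y else f j].

Definition is_box (ab : {ffun 'I_p -> 'I_m} * {ffun 'I_p -> 'I_m}) : bool :=
  [forall i, ab.1 i != ab.2 i].

Definition corners (ab : {ffun 'I_p -> 'I_m} * {ffun 'I_p -> 'I_m}) :
  {set {ffun 'I_p -> 'I_m}} :=
  [set [ffun i => if s i then ab.2 i else ab.1 i] | s : {ffun 'I_p -> bool}].

Definition box_free S : Prop := forall ab, is_box ab -> ~~ (corners ab \subset S).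

Definition bad_boxes S := [set ab | is_box ab && (corners ab \subset S)].

Definition prune S := S :\: [set ab.1 | ab in bad_boxes S].

Lemma vtx_inj i j x y : vtx i x = vtx j y -> i = j /\ x = y.
Proof. by move/enum_rank_inj => [-> ->]. Qed.

Lemma mem_facet f i x : (vtx i x \in facet f) = (f i == x).
Proof. by apply/imsetP/eqP => [[j _ /vtx_inj [-> ->]] // | <-]; exists i. Qed.

Lemma card_facet f : #|facet f| = p.
Proof. by rewrite card_imset ?card_ord // => i j /vtx_inj []. Qed.

Lemma facet_inj : injective facet.
Proof. by move=> f g Efg; apply/ffunP => i; apply/eqP; rewrite -mem_facet Efg mem_facet. Qed.

Lemma update_eq f i y : update f i y i = y.
Proof. by rewrite ffunE eqxx. Qed.

Lemma update_neq f i j y : j != i -> update f i y j = f j.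
Proof. by rewrite ffunE => /negbTE ->. Qed.

Lemma update_id f i : update f i (f i) = f.
Proof. by apply/ffunP => j; rewrite ffunE; case: eqP => [->|]. Qed.

Lemma facet_update f g i :
  facet f :\ vtx i (f i) \subset facet g -> g = update f i (g i).
Proof.
move=> sub; apply/ffunP => j; case: (eqVneq j i) => [-> | ji]; first by rewrite update_eq.
rewrite update_neq //; apply/eqP; rewrite -mem_facet (subsetP sub) //.
by rewrite !inE mem_facet eqxx andbT; apply: contra ji => /eqP /vtx_inj [->].
Qed.

(* The facets of two maps differing everywhere are disjoint. *)
Lemma card_facetU f g : (forall i, f i != g i) -> #|facet f :|: facet g| = 2 * p.
Proof.
move=> fg; rewrite cardsU !card_facet addnn mul2n.
suff -> : facet f :&: facet g = set0 by rewrite cards0 subn0.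
apply/setP => v; rewrite !inE; apply/negP => /andP [/imsetP [i _ ->]].
by rewrite mem_facet eq_sym (negbTE (fg i)).
Qed.

Lemma mem_corners ab g :
  (g \in corners ab) = [forall i, (g i == ab.1 i) || (g i == ab.2 i)].
Proof.
apply/imsetP/forallP => [[s _ ->] i | g_ab].
  by rewrite ffunE; case: (s i); rewrite eqxx ?orbT.
exists [ffun i => g i == ab.2 i] => //; apply/ffunP => i; rewrite !ffunE.
by case: eqP => [-> // | ne]; move: (g_ab i) => /orP [/eqP // | /eqP /ne].
Qed.

(* A box has exactly 2^p corners; this is the exponent of the probability
   that a box survives the random selection. *)
Lemma card_corners ab : is_box ab -> #|corners ab| = 2 ^ p.
Proof.
move=> /forallP ab_box; rewrite card_imset ?card_ffun ?card_bool ?card_ord //.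
move=> s1 s2 /ffunP E; apply/ffunP => i; move: (E i) (ab_box i); rewrite !ffunE.
by case: (s1 i); case: (s2 i) => // ->; rewrite eqxx.
Qed.

(* Pruning destroys every box: its first corner has been removed. *)
Lemma prune_box_free S : box_free (prune S).
Proof.
move=> ab ab_box; apply/negP => sub.
have a_corner : ab.1 \in corners ab by rewrite mem_corners; apply/forallP => i; rewrite eqxx.
move: (subsetP sub _ a_corner); rewrite inE => /andP [/negP []]; apply/imsetP.
exists ab => //; rewrite inE ab_box (subset_trans sub) ?subsetDl //.
Qed.

Lemma card_prune S : #|S| <= #|prune S| + #|bad_boxes S|.
Proof.
rewrite -[X in X <= _](cardsID [set ab.1 | ab in bad_boxes S]) addnC leq_add2l.
exact: leq_trans (subset_leq_card (subsetIr _ _)) (leq_imset_card _ _).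
Qed.

(* The proof is
   by induction on the number of coordinates in which a corner differs from a. *)
Lemma flip_closed_corners Z a b :
  a \in Z -> (forall g i, g \in Z -> (g i == a i) || (g i == b i)) ->
  (forall g i, g \in Z -> exists2 y, y != g i & update g i y \in Z) ->
  corners (a, b) \subset Z.
Proof.
move=> aZ two_valued flip; apply/subsetP => g.
have eq_a h : [set i | h i != a i] = set0 -> h = a.
  move=> diff0; apply/ffunP => i; apply/eqP/negPn; apply/negP => ne.
  by have := in_set0 i; rewrite -diff0 inE ne.
have [k] := ubnP #|[set i | g i != a i]|; elim: k g => // k IH g.
case: (set_0Vmem [set i | g i != a i]) => [/eq_a -> // | [i]].
rewrite inE => gi_ne diff_k g_corner.
have gi : g i = b i.
  by move: g_corner; rewrite mem_corners => /forallP /(_ i) /orP [/eqP gi|/eqP //]; rewrite gi eqxx in gi_ne.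
set g0 := update g i (a i).
have g0Z : g0 \in Z.
  apply: IH; last first.
    rewrite mem_corners; apply/forallP => j; case: (eqVneq j i) => [-> | ji].
      by rewrite update_eq eqxx.
    by rewrite update_neq //; move: g_corner; rewrite mem_corners => /forallP.
  rewrite -ltnS (leq_trans _ diff_k) // ltnS; apply: proper_card; apply/properP; split.
    apply/subsetP => j; rewrite !inE; case: (eqVneq j i) => [-> | ji].
      by rewrite update_eq eqxx.
    by rewrite update_neq.
  by exists i; rewrite !inE ?update_eq ?eqxx.
have [y y_ne yZ] := flip g0 i g0Z.
have yb : y = b i.
  move: (two_valued _ i yZ); rewrite update_eq => /orP [/eqP ya | /eqP //].
  by rewrite ya /g0 update_eq eqxx in y_ne.
suff -> : g = update g0 i y by [].
apply/ffunP => j; case: (eqVneq j i) => [-> | ji]; first by rewrite update_eq yb gi.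
by rewrite !update_neq.
Qed.

(* A nonempty flip-closed family whose facets all lie in a set of at most 2p
   vertices contains a whole box: two neighbours of one member already use
   up 2p vertices, which forces the family to be two-valued. *)
Lemma flip_closed_box Z (W : {set 'I_#|{: 'I_p * 'I_m}|}) :
  Z != set0 -> #|W| <= 2 * p -> (forall f, f \in Z -> facet f \subset W) ->
  (forall g i, g \in Z -> exists2 y, y != g i & update g i y \in Z) ->
  exists2 ab, is_box ab & corners ab \subset Z.
Proof.
move=> /set0Pn [a aZ] cardW facetW flip.
have nbr i : exists y, (y != a i) && (update a i y \in Z).
  by have [y y_ne yZ] := flip a i aZ; exists y; rewrite y_ne.
pose b := [ffun i => xchoose (nbr i)].
have /all_and2 [ba bZ] : forall i, b i != a i /\ update a i (b i) \in Z.
  by move=> i; rewrite ffunE; have /andP [] := xchooseP (nbr i).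
have EW : facet a :|: facet b = W.
  apply/eqP; rewrite eqEcard card_facetU => [|i]; last by rewrite eq_sym.
  rewrite cardW andbT subUset facetW //=; apply/subsetP => _ /imsetP [i _ ->].
  by apply: (subsetP (facetW _ (bZ i))); rewrite mem_facet update_eq.
exists (a, b); first by apply/forallP => i; rewrite eq_sym.
apply: flip_closed_corners => // g i gZ.
have : vtx i (g i) \in W by rewrite (subsetP (facetW _ gZ)) ?mem_facet.
by rewrite -EW inE !mem_facet ![_ == g i]eq_sym.
Qed.

End Boxes.

Section LinksAndGirth.
Variable n : nat.
Implicit Types (G : {set {set 'I_n}}) (F H W s : {set 'I_n}).

Lemma mem_link G F s :
  reflect (exists2 H, (H \in G) && (F \subset H) & s = H :\: F) (s \in link G F).
Proof.
apply: (iffP imsetP) => [[H] | [H HG ->]]; first by rewrite inE => HG ->; exists H.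
by exists H; rewrite ?inE.
Qed.

Lemma induced_link_closed G F W s H :
  (forall F' H', F' \in G -> H' \subset F' -> H' \in G) ->
  s \in induced (link G F) W -> H \subset s -> H \in induced (link G F) W.
Proof.
move=> Gcl; rewrite !inE => /andP [/mem_link [H0 /andP [H0G FH0] ->] sW] HS.
rewrite (subset_trans HS sW) andbT; apply/mem_link; exists (H :|: F).
  rewrite subsetUr andbT (Gcl H0) // subUset FH0 andbT.
  exact: subset_trans HS (subsetDl _ _).
rewrite setDUl setDv setU0; apply/esym/setDidPl.
by rewrite disjoint_sym (disjointWr HS) // disjoint_sym disjoints_subset setDE subsetIr.
Qed.

(* The girth exceeds k as soon as no link of G has j-homology on a vertex set
   of size at most k (the bound k < n + 1 keeps the default of the minimum
   above k). *)
Lemma girth_gt (K : fieldType) G j k :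
  k < n.+1 ->
  (forall F W, F \in G -> #|W| <= k -> ~~ rhom_nonzero K (induced (link G F) W) j) ->
  ext_gt (girth K G j) k.
Proof.
move=> kn acyclic; rewrite /girth; case: ifP => _ //=.
apply: (big_ind (fun x => k < x)) => // [x y kx ky | W /existsP [F /andP [FG hom]]].
  by rewrite leq_min kx ky.
by rewrite ltnNge; apply: contraL hom => /(acyclic F W FG).
Qed.

End LinksAndGirth.

Section FacetComplex.
Variables p m : nat.
Hypothesis p_ge2 : 2 <= p.
Variable S : {set {ffun 'I_p -> 'I_m}}.
Implicit Types (f g : {ffun 'I_p -> 'I_m}) (F H W s : {set 'I_#|{: 'I_p * 'I_m}|}).

Definition facet_complex : {set {set 'I_#|{: 'I_p * 'I_m}|}} :=
  [set F : {set 'I_#|{: 'I_p * 'I_m}|} | (#|F| <= 1) || [exists f in S, F \subset facet f]].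

Lemma facet_complex_closed F H :
  F \in facet_complex -> H \subset F -> H \in facet_complex.
Proof.
rewrite !inE => /orP [F1 | /exists_inP [f fS Ff]] HF.
  by rewrite (leq_trans (subset_leq_card HF) F1).
by apply/orP; right; apply/exists_inP; exists f => //; apply: subset_trans Ff.
Qed.

Lemma facet_complex_simplicial : is_simplicial_complex facet_complex.
Proof. by split=> [F H | v]; [apply: facet_complex_closed | rewrite inE cards1]. Qed.

Lemma facet_in_complex f : f \in S -> facet f \in facet_complex.
Proof. by move=> fS; rewrite inE; apply/orP; right; apply/exists_inP; exists f. Qed.

Lemma card_face F : F \in facet_complex -> #|F| <= p.
Proof.
rewrite inE => /orP [F1 | /exists_inP [f _ Ff]]; first exact: leq_trans F1 (ltnW p_ge2).
by rewrite -[X in _ <= X](card_facet f) subset_leq_card.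
Qed.

Lemma top_face F : F \in facet_complex -> #|F| = p -> exists2 f, f \in S & F = facet f.
Proof.
rewrite inE => /orP [F1 | /exists_inP [f fS Ff]] cF.
  by move: F1; rewrite cF => /(leq_trans p_ge2).
by exists f => //; apply/eqP; rewrite eqEcard Ff card_facet cF leqnn.
Qed.

Lemma facet_complex_dim : S != set0 -> dimension facet_complex = p - 1.
Proof.
move=> /set0Pn [f fS]; rewrite /dimension subn1; congr predn; apply/eqP.
rewrite eqn_leq; apply/andP; split; first by apply/bigmax_leqP => F; apply: card_face.
by rewrite -[X in X <= _](card_facet f) (bigD1 (facet f)) ?facet_in_complex //= leq_maxl.
Qed.

Lemma facet_complex_fnum : fnum facet_complex (p - 1) = #|S|.
Proof.
rewrite /fnum subn1 prednK ?(ltnW p_ge2) // -(card_imset _ (@facet_inj p m)).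
apply: eq_card => F; rewrite in_set; apply/andP/imsetP => [[FG /eqP cF] | [f fS ->]].
  by have [f fS ->] := top_face FG cF; exists f.
by rewrite facet_in_complex ?card_facet.
Qed.

Lemma top_face_induced_link F W s :
  s \in faces_of (induced (link facet_complex F) W) p ->
  (exists2 f, f \in S & s = facet f) /\ s \subset W.
Proof.
rewrite !inE => /andP [/andP [/mem_link [H /andP [HG FH] ->] sW] /eqP cs]; split => //.
have cH : #|H| = p.
  by apply/eqP; rewrite eqn_leq card_face //= -{1}cs subset_leq_card ?subsetDl.
have [f fS Hf] := top_face HG cH.
by exists f => //; apply/eqP; rewrite eqEcard card_facet cs leqnn andbT -Hf subsetDl.
Qed.

(* A family of top faces without a
   free face would be flip-closed, hence contain a box. *)
Lemma facet_complex_small_acyclic (K : fieldType) F W :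
  box_free S -> #|W| <= 2 * p ->
  ~~ rhom_nonzero K (induced (link facet_complex F) W) (p - 1).
Proof.
move=> Sfree cardW; have Ep : (p - 1).+1 = p by rewrite subn1 prednK // ltnW.
apply: free_face_acyclic; rewrite Ep.
  move=> s /setIdP [sL _] v _; apply: induced_link_closed sL (subD1set _ _).
  exact: facet_complex_closed.
move=> Z Z_neq0 ZF.
have topZ s : s \in Z -> (exists2 f, f \in S & s = facet f) /\ s \subset W.
  by move=> sZ; apply: top_face_induced_link; apply: (subsetP ZF).
case: (boolP [exists s0 in Z, exists v in s0,
                 [forall s in Z, (s0 :\ v \subset s) ==> (s == s0)]]).
  move=> /exists_inP [s0 s0Z /exists_inP [v vs0 /forall_inP s0_only]].
  exists s0 => //; exists v => // s sZ sub.
  by apply/eqP; move: (s0_only s sZ); rewrite sub.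
move=> no_free; exfalso.
pose Zf := [set f | facet f \in Z].
have [|||ab ab_box ab_Zf] := @flip_closed_box p m Zf W _ cardW.
- case/set0Pn: Z_neq0 => s sZ; have [[f _ Ef] _] := topZ _ sZ.
  by apply/set0Pn; exists f; rewrite inE -Ef.
- by move=> f; rewrite inE => fZ; have [_ ->] := topZ _ fZ.
- move=> f i; rewrite inE => fZ.
  move/exists_inPn: no_free => /(_ _ fZ) /exists_inPn /(_ (vtx i (f i))).
  rewrite mem_facet eqxx => /(_ isT) /forall_inPn [s sZ].
  rewrite negb_imply => /andP [sub s_ne].
  have [[g _ Eg] _] := topZ _ sZ.
  rewrite Eg in sub s_ne; rewrite (facet_update sub) in s_ne.
  exists (g i); first by apply: contra s_ne => /eqP ->; rewrite update_id.
  by rewrite inE -(facet_update sub) -Eg.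
apply: (negP (Sfree ab ab_box)); apply: subset_trans ab_Zf _.
by apply/subsetP => f; rewrite inE => /topZ [[g gS /facet_inj ->]].
Qed.

End FacetComplex.

(* Random families: a map h : T -> 'I_N.+1 selects the set of points where h
   vanishes, a subset in which each point lies with "probability" 1/(N+1).
   Expectations are replaced by sums over all such maps h. *)
Section Counting.

Lemma double_count (I J : finType) (R : J -> I -> bool) :
  \sum_j #|[set i | R j i]| = \sum_i #|[set j | R j i]|.
Proof.
under eq_bigr do rewrite -sum1dep_card.
rewrite (exchange_big_dep xpredT) //=; apply: eq_bigr => i _.
by rewrite -sum1dep_card.
Qed.

Lemma exists_ge_average (T : finType) (F : T -> nat) a :
  0 < #|T| -> #|T| * a <= \sum_x F x -> exists x, a <= F x.
Proof.
move=> /card_gt0P [x0 _] le_sum; apply/existsP; apply: contraLR le_sum => /existsPn small.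
rewrite -ltnNge -sum_nat_const (bigD1 x0) //= [X in _ < X](bigD1 x0) //=.
rewrite -addSn leq_add //; first by rewrite ltnNge small.
by apply: leq_sum => x _; rewrite ltnW // ltnNge small.
Qed.

Lemma card_vanishing_maps (T : finType) N (A : {set T}) :
  #|[set h : {ffun T -> 'I_N.+1} | [forall x in A, h x == ord0]]| = N.+1 ^ (#|T| - #|A|).
Proof.
pose F x := if x \in A then pred1 (@ord0 N) else predT.
rewrite (eq_card (B := finfun.family F)) => [|h]; last first.
  rewrite inE; apply/forall_inP/familyP => [h0 x | hF x xA]; rewrite /F.
    by case: ifP => xA //; rewrite inE h0.
  by move: (hF x); rewrite /F xA.
rewrite card_family foldrE big_map big_enum /= (bigID (mem A)) /= big1 => [|x xA]; last first.
  by rewrite /F xA card1.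
rewrite mul1n (eq_bigr (fun=> N.+1)) => [|x xA]; last first.
  by rewrite /F (negbTE xA) -[RHS](card_ord N.+1); apply: eq_card.
by rewrite prod_nat_const -(cardC A) addKn.
Qed.

Lemma sum_card_zeros (T : finType) N :
  \sum_(h : {ffun T -> 'I_N.+1}) #|[set x | h x == ord0]| = #|T| * N.+1 ^ (#|T| - 1).
Proof.
rewrite (double_count (fun (h : {ffun T -> 'I_N.+1}) x => h x == ord0)).
rewrite -sum_nat_const /=; apply: eq_bigr => x _.
rewrite -(cards1 x) -card_vanishing_maps; apply: eq_card => h; rewrite !inE.
apply/eqP/forall_inP => [hx y /set1P -> | hA]; first by rewrite hx.
by apply/eqP/hA/set11.
Qed.

(* Each box is entirely selected by N.+1 ^ (t - 2 ^ p) of the maps, where t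
   is the number of points; there are at most t ^ 2 boxes. *)
Lemma sum_card_bad_boxes p m N :
  \sum_(h : {ffun {ffun 'I_p -> 'I_m} -> 'I_N.+1}) #|bad_boxes [set f | h f == ord0]|
   <= #|{ffun 'I_p -> 'I_m}| ^ 2 * N.+1 ^ (#|{ffun 'I_p -> 'I_m}| - 2 ^ p).
Proof.
rewrite (double_count (fun (h : {ffun {ffun 'I_p -> 'I_m} -> 'I_N.+1}) ab =>
   is_box ab && (corners ab \subset [set f | h f == ord0]))).
rewrite expnS expn1 -card_prod -sum_nat_const /= leq_sum // => ab _.
case: (boolP (is_box ab)) => ab_box /=; last first.
  by rewrite (eq_card (B := pred0)) ?card0 // => h; rewrite inE.
rewrite -(card_corners ab_box) -card_vanishing_maps leq_eqVlt; apply/orP; left.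
apply/eqP; apply: eq_card => h; rewrite !inE.
by apply/subsetP/forall_inP => sub x /sub; rewrite inE.
Qed.

Lemma averaging_arith (n1 t E X P B : nat) :
  t * E * X <= P + B -> B <= t * t * X -> 2 * t <= E -> n1 * E * X * t <= 2 * n1 * P.
Proof.
move=> hPB hB hE; have hEtX := leq_mul hE (leqnn (t * X)).
have htEX : t * E * X <= 2 * P by lia.
by have := leq_mul (leqnn n1) htEX; lia.
Qed.

(* Deletion method: with t points and selection probability 1/(N+1), the
   expected number of boxes, at most t^2 / (N+1)^(2^p), is at most half the
   expected number t / (N+1) of selected points as soon as
   2t <= (N+1)^(2^p - 1); pruning one point per box then leaves a box-free
   family of size at least t / (2(N+1)). *)
Lemma exists_dense_box_free p m N :
  2 ^ p <= #|{ffun 'I_p -> 'I_m}| ->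
  2 * #|{ffun 'I_p -> 'I_m}| <= N.+1 ^ (2 ^ p - 1) ->
  exists S : {set {ffun 'I_p -> 'I_m}},
    box_free S /\ #|{ffun 'I_p -> 'I_m}| <= 2 * N.+1 * #|S|.
Proof.
set t := #|{ffun 'I_p -> 'I_m}| => t_ge t_le.
pose sel (h : {ffun {ffun 'I_p -> 'I_m} -> 'I_N.+1}) := [set f | h f == ord0].
suff [h dense] : exists h, t <= 2 * N.+1 * #|prune (sel h)|.
  by exists (prune (sel h)); split; [apply: prune_box_free |].
have card_maps : #|{ffun {ffun 'I_p -> 'I_m} -> 'I_N.+1}| = N.+1 ^ t.
  by rewrite card_ffun card_ord.
apply: exists_ge_average; first by rewrite card_maps expn_gt0.
have sum_pruned : \sum_h #|sel h| <= \sum_h #|prune (sel h)| + \sum_h #|bad_boxes (sel h)|.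
  by rewrite -big_split leq_sum // => h _; apply: card_prune.
rewrite sum_card_zeros -/t in sum_pruned.
have exp_split : t = 1 + (2 ^ p - 1) + (t - 2 ^ p).
  by rewrite add1n subn1 prednK ?expn_gt0 // subnKC.
rewrite card_maps -big_distrr /= {1}exp_split !expnD expn1.
have exp_pred : t - 1 = (2 ^ p - 1) + (t - 2 ^ p).
  by rewrite {1}exp_split -addnA addKn.
apply: averaging_arith t_le; last by rewrite mulnn; apply: sum_card_bad_boxes.
by rewrite -mulnA -expnD -exp_pred.
Qed.

End Counting.

Lemma exponent_pos p : 2 <= p -> 0 < 2 ^ p - 1.
Proof. by move=> p_ge2; rewrite subn_gt0 (leq_trans _ (leq_pexp2l (isT : 0 < 2) p_ge2)). Qed.

Lemma vertex_bound p M e : 0 < e -> p * M <= #|{: 'I_p * 'I_(M ^ e)}|.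
Proof.
move=> e_pos; rewrite card_prod !card_ord leq_mul2l; case: M => [|M]; rewrite ?orbT //.
by rewrite -{1}(expn1 M.+1) leq_pexp2l ?orbT.
Qed.

(* Instantiation: M ^ (2 ^ p - 1) labels per part and selection probability
   1 / (2 M ^ p). *)
Lemma dense_box_free_family p M : 2 <= p -> 2 <= M ->
  exists S : {set {ffun 'I_p -> 'I_(M ^ (2 ^ p - 1))}},
    box_free S /\ M ^ ((2 ^ p - 1) * p) <= 4 * M ^ p * #|S|.
Proof.
move=> p_ge2 M_ge2; have e_pos := exponent_pos p_ge2; set e := 2 ^ p - 1 in e_pos *.
have M_pos : 0 < M by apply: leq_trans M_ge2.
have card_pts : #|{ffun 'I_p -> 'I_(M ^ e)}| = M ^ (e * p).
  by rewrite card_ffun !card_ord expnM.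
have N1 : (2 * M ^ p).-1.+1 = 2 * M ^ p by rewrite prednK // muln_gt0 expn_gt0 M_pos.
have [||S [Sfree dense]] := @exists_dense_box_free p (M ^ e) (2 * M ^ p).-1.
- rewrite card_pts (leq_trans (leq_pexp2l (isT : 0 < 2) (leq_pmull p e_pos))) //.
  by rewrite leq_exp2r // muln_gt0 e_pos (leq_trans _ p_ge2).
- rewrite card_pts N1 expnMn -expnM -/e (mulnC p e) leq_mul2r.
  by rewrite -{1}(expn1 2) leq_pexp2l // orbT.
by exists S; split => //; rewrite card_pts N1 mulnA in dense.
Qed.

Lemma high_girth_complex (K : fieldType) p M : 2 <= p -> 2 <= M ->
  exists G : {set {set 'I_#|{: 'I_p * 'I_(M ^ (2 ^ p - 1))}|}},
    [/\ is_simplicial_complex G, dimension G = p - 1,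
        ext_gt (girth K G (p - 1)) (2 * p) &
        M ^ ((2 ^ p - 1) * p) <= 4 * M ^ p * fnum G (p - 1)].
Proof.
move=> p_ge2 M_ge2; have [S [Sfree dense]] := dense_box_free_family p_ge2 M_ge2.
exists (facet_complex S); split.
- exact: facet_complex_simplicial.
- apply: facet_complex_dim => //; apply: contraTneq dense => ->.
  by rewrite cards0 muln0 -ltnNge expn_gt0 (leq_trans _ M_ge2).
- apply: girth_gt => [|F W _]; last exact: facet_complex_small_acyclic.
  rewrite ltnS (leq_trans _ (vertex_bound _ _ (exponent_pos p_ge2))) //.
  by rewrite mulnC leq_mul2l M_ge2 orbT.
- by rewrite facet_complex_fnum.
Qed.

Section GrowthRate.
Local Open Scope R_scope.

Lemma INR_expn a b : INR (a ^ b)%N = INR a ^ b.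
Proof. by rewrite -pow_INR; congr INR; elim: b => //= b IH; rewrite expnS IH. Qed.

(* Real-number form of the count: with n = p M ^ e vertices,
   n ^ (p - p / e) <= p ^ p M ^ (e p - p), so the bound
   M ^ (e p) <= 4 M ^ p s gives s >= n ^ (p - p / e) / (4 p ^ p). *)
Lemma growth_bound (n p M e s : nat) : (2 <= p)%N -> (1 <= e)%N -> (2 <= M)%N ->
  n = (p * M ^ e)%N -> (M ^ (e * p) <= 4 * M ^ p * s)%N ->
  / (4 * INR p ^ p) * Rpower (INR n) (INR p - INR p / INR e) <= INR s.
Proof.
move=> p_ge2 e_pos M_ge2 -> dense.
have dense' : (M ^ (e * p - p) <= 4 * s)%N.
  rewrite -(@leq_pmul2l (M ^ p)%N) ?expn_gt0 ?(leq_trans _ M_ge2) //.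
  by rewrite -expnD subnKC ?leq_pmull // mulnA (mulnC _ 4%N).
have pR : 0 < INR p by apply: lt_0_INR; apply/ltP; apply: leq_trans p_ge2.
have MR : 0 < INR M by apply: lt_0_INR; apply/ltP; apply: leq_trans M_ge2.
have eR : 0 < INR e by apply: lt_0_INR; apply/ltP.
have ppR : 0 < INR p ^ p by apply: pow_lt.
have MeR : 0 < INR M ^ e by apply: pow_lt.
rewrite mult_INR INR_expn -Rpower_mult_distr //.
rewrite -(@Rpower_pow e (INR M) MR) Rpower_mult.
have -> : INR e * (INR p - INR p / INR e) = INR (e * p - p).
  rewrite minus_INR; last by apply/leP; rewrite leq_pmull.
  by rewrite mult_INR; field; lra.
rewrite Rpower_pow //.
have p_part : Rpower (INR p) (INR p - INR p / INR e) <= INR p ^ p.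
  rewrite -Rpower_pow //; apply: Rle_Rpower.
    by have /le_INR : (1 <= p)%coq_nat by apply/leP; apply: ltnW.
  have : 0 <= INR p / INR e by apply: Rmult_le_pos; [lra | apply/Rlt_le/Rinv_0_lt_compat].
  lra.
have M_part : INR M ^ (e * p - p) <= 4 * INR s.
  have -> : 4 = INR 4 by rewrite /=; lra.
  by rewrite -INR_expn -mult_INR; apply/le_INR/leP.
have M_nneg : 0 <= INR M ^ (e * p - p) by apply: pow_le; lra.
apply: (Rle_trans _ (/ (4 * INR p ^ p) * (INR p ^ p * INR M ^ (e * p - p)))).
  apply: Rmult_le_compat_l; first by apply/Rlt_le/Rinv_0_lt_compat; lra.
  by apply: Rmult_le_compat_r.
have -> : / (4 * INR p ^ p) * (INR p ^ p * INR M ^ (e * p - p)) = INR M ^ (e * p - p) / 4.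
  by field; lra.
lra.
Qed.

End GrowthRate.

Lemma Nat_pow_expn a b : Nat.pow a b = expn a b.
Proof. by elim: b => //= b IH; rewrite expnS IH. Qed.

End BoxFreeComplexes.

Import BoxFreeComplexes.

(* Take C = 1 / (4 p ^ p) and, for a given N, M = N + 2: the complex of
   high_girth_complex has n = p M ^ (2^p - 1) >= N vertices, and growth_bound
   turns its count of top faces into C n ^ (p - p / (2^p - 1)). *)
Theorem mainTheorem15 (K : fieldType) (p : nat) (hp : (2 <= p)%N) :
  exists C : R, Rlt 0 C /\
    forall N : nat, exists n : nat, (N <= n)%N /\ (0 < n)%N /\
      exists G : {set {set 'I_n}},
        is_simplicial_complex G /\
        dimension G = (p - 1)%N /\
        ext_gt (girth K G (p - 1)) (2 * p) /\
        Rle (Rmult C (Rpower (INR n)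
               (Rminus (INR p) (Rdiv (INR p) (INR (2 ^ p - 1))))))
            (INR (fnum G (p - 1))).
Proof.
rewrite Nat_pow_expn; have e_pos := exponent_pos hp.
exists (/ (4 * INR p ^ p))%R; split.
  apply/Rinv_0_lt_compat/Rmult_lt_0_compat; first lra.
  by apply/pow_lt/lt_0_INR/ltP/ltnW.
move=> N; have [G [Gsc Gdim Ggirth Gdense]] := high_girth_complex K hp (isT : (2 <= N.+2)%N).
have n_ge : (N.+2 <= #|{: 'I_p * 'I_(expn N.+2 (expn 2 p - 1))}|)%N.
  exact: leq_trans (leq_pmull _ (ltnW hp)) (vertex_bound _ _ e_pos).
exists #|{: 'I_p * 'I_(expn N.+2 (expn 2 p - 1))}|.
split; first by apply: leq_trans _ n_ge; rewrite !leqW.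
split; first exact: leq_trans _ n_ge.
exists G; do 3 split => //.
by apply: growth_bound Gdense; rewrite // card_prod !card_ord.
Qed.
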